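(* Let $(X,d)$ be a $\delta$-Gromov hyperbolic space, $p\in X$, $\epsilon>0$, and $X^\epsilon=(X,d_\epsilon)$ the uniformized space. Let $x\in\partial_{d_\epsilon}X^\epsilon$. Then every sequence $(x_n)\subseteq X$ converging to $x$ with respect to $d_\epsilon$ has a subsequence $(x_{n_k})_k$ which is a Gromov sequence.
   Context: Gromov product $(x|y)_p=\frac12(d(p,x)+d(p,y)-d(x,y))$. $\delta$-Gromov hyperbolic: unbounded, proper, geodesic, and $(x|z)_p\ge\min\{(x|y)_p,(y|z)_p\}-\delta$ for all $x,y,z,p$. Uniformized metric: $d_\epsilon(x,y)=\inf_\gamma\int_\gamma e^{-\epsilon d(p,z)}ds(z)$ over $d$-rectifiable curves from $x$ to $y$; $\partial_{d_\epsilon}X^\epsilon=\overline{X^\epsilon}\setminus X^\epsilon$ (closure in the completion). A Gromov sequence is $(x_n)$ with $(x_n|x_m)_p\to\infty$ as $n,m\to\infty$. *)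

From Stdlib Require Import Reals List.
Open Scope R_scope.

Definition is_metric {X : Type} (d : X -> X -> R) : Prop :=
  (forall x y, d x y = 0 <-> x = y) /\
  (forall x y, d x y = d y x) /\
  (forall x y z, d x z <= d x y + d y z).

Definition is_glb (E : R -> Prop) (m : R) : Prop :=
  (forall y, E y -> m <= y) /\ (forall b, (forall y, E y -> b <= y) -> b <= m).

Definition gromov_prod {X : Type} (d : X -> X -> R) (p x y : X) : R :=
  (d p x + d p y - d x y) / 2.

Definition open_set {X : Type} (d : X -> X -> R) (U : X -> Prop) : Prop :=
  forall x, U x -> exists r, 0 < r /\ forall y, d x y < r -> U y.

Definition compact_set {X : Type} (d : X -> X -> R) (K : X -> Prop) : Prop :=
  forall (I : Type) (U : I -> X -> Prop),
    (forall i, open_set d (U i)) ->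
    (forall x, K x -> exists i, U i x) ->
    exists l : list I, forall x, K x -> exists i, In i l /\ U i x.

Definition proper_space {X : Type} (d : X -> X -> R) : Prop :=
  forall (c : X) (r : R), compact_set d (fun y => d c y <= r).

Definition geodesic_space {X : Type} (d : X -> X -> R) : Prop :=
  forall x y : X, exists g : R -> X,
    g 0 = x /\ g (d x y) = y /\
    forall s t, 0 <= s <= d x y -> 0 <= t <= d x y -> d (g s) (g t) = Rabs (s - t).

Definition unbounded_space {X : Type} (d : X -> X -> R) : Prop :=
  forall M : R, exists x y : X, d x y > M.

Definition gromov_hyperbolic {X : Type} (d : X -> X -> R) (delta : R) : Prop :=
  is_metric d /\ unbounded_space d /\ proper_space d /\ geodesic_space d /\
  forall x y z p : X,
    gromov_prod d p x z >= Rmin (gromov_prod d p x y) (gromov_prod d p y z) - delta.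

(** [part a b l] : [a :: l] is a strictly increasing partition of [a,b] ending at b *)
Fixpoint part (a b : R) (l : list R) : Prop :=
  match l with
  | nil => a = b
  | t :: l' => a < t /\ part t b l'
  end.

Fixpoint poly_len {X : Type} (d : X -> X -> R) (g : R -> X) (t0 : R) (l : list R) : R :=
  match l with
  | nil => 0
  | t1 :: l' => d (g t0) (g t1) + poly_len d g t1 l'
  end.

Definition curve_length {X : Type} (d : X -> X -> R) (g : R -> X) (a b L : R) : Prop :=
  is_lub (fun v => exists l, part a b l /\ v = poly_len d g a l) L.

Definition continuous_on {X : Type} (d : X -> X -> R) (g : R -> X) (a b : R) : Prop :=
  forall t, a <= t <= b -> forall eta, 0 < eta ->
    exists mu, 0 < mu /\ forall s, a <= s <= b -> Rabs (s - t) < mu -> d (g s) (g t) < eta.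

Definition rectifiable {X : Type} (d : X -> X -> R) (g : R -> X) (a b : R) : Prop :=
  a <= b /\ continuous_on d g a b /\ exists L, curve_length d g a b L.

(** lower Darboux-Stieltjes sums of f along g with respect to arc length:
    sum over the pieces [t_{i-1},t_i] of (inf of f o g on the piece) * (length of the piece) *)
Fixpoint lower_sum_rel {X : Type} (d : X -> X -> R) (f : X -> R) (g : R -> X)
    (t0 : R) (l : list R) (v : R) : Prop :=
  match l with
  | nil => v = 0
  | t1 :: l' => exists m L v',
      is_glb (fun y => exists t, t0 <= t <= t1 /\ y = f (g t)) m /\
      curve_length d g t0 t1 L /\
      lower_sum_rel d f g t1 l' v' /\ v = m * L + v'
  end.

Definition line_integral {X : Type} (d : X -> X -> R) (f : X -> R) (g : R -> X) (a b I : R) : Prop :=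
  is_lub (fun v => exists l, part a b l /\ lower_sum_rel d f g a l v) I.

Definition uniformized_dist {X : Type} (d : X -> X -> R) (p : X) (eps : R) (x y : X) (v : R) : Prop :=
  is_glb (fun I => exists (g : R -> X) (a b : R),
             rectifiable d g a b /\ g a = x /\ g b = y /\
             line_integral d (fun z => exp (- eps * d p z)) g a b I) v.

Definition complete_space {Y : Type} (D : Y -> Y -> R) : Prop :=
  forall u : nat -> Y,
    (forall eta, 0 < eta -> exists N, forall n m, (N <= n)%nat -> (N <= m)%nat -> D (u n) (u m) < eta) ->
    exists y, forall eta, 0 < eta -> exists N, forall n, (N <= n)%nat -> D (u n) y < eta.

Definition is_completion {X Y : Type} (de : X -> X -> R) (D : Y -> Y -> R) (iota : X -> Y) : Prop :=
  is_metric D /\ complete_space D /\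
  (forall x y, D (iota x) (iota y) = de x y) /\
  (forall y eta, 0 < eta -> exists x, D y (iota x) < eta).

Definition gromov_sequence {X : Type} (d : X -> X -> R) (p : X) (u : nat -> X) : Prop :=
  forall M : R, exists N, forall n m, (N <= n)%nat -> (N <= m)%nat -> gromov_prod d p (u n) (u m) > M.

From Stdlib Require Import Reals List.
From Stdlib Require Import Lra Lia Classical ClassicalEpsilon.
Open Scope R_scope.

(* Since the weight exp(-eps d(p,.)) is at most 1, a geodesic from y to z shows
   d_eps(y,z) <= d(y,z). Hence if d(p, x_n) stayed bounded along infinitely many n,
   properness would give a d-cluster point z of (x_n), and x = z would lie in X^eps.
   So d(p, x_n) -> oo. For a level K, the points at distance K from p on geodesics
   [p, x_n] lie in a compact ball, hence are pairwise 1-close along an infinite set of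
   indices, and the four-point condition along the chain x_n, u_n, u_m, x_m gives
   (x_n|x_m)_p >= K - 1/2 - 2 delta there. A diagonal extraction over K = 0, 1, 2, ...
   yields a Gromov subsequence. *)

Definition infinitely_often (S : nat -> Prop) : Prop :=
  forall N, exists n, (N <= n)%nat /\ S n.

Definition cluster_point {X : Type} (d : X -> X -> R) (u : nat -> X) (S : nat -> Prop)
    (z : X) : Prop :=
  forall eta, 0 < eta -> forall N, exists n, (N <= n)%nat /\ S n /\ d z (u n) < eta.

Lemma In_upper_bound {I : Type} (f : I -> nat) (l : list I) :
  exists N, forall i, In i l -> (f i <= N)%nat.
Proof.
  induction l as [|j l [N HN]]; [exists O; intros i []|].
  exists (Nat.max (f j) N). intros i [<-|Hi]; [lia|]. specialize (HN i Hi). lia.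
Qed.

Lemma diagonal_subsequence (P : nat -> nat -> nat -> Prop) :
  (forall k T, infinitely_often T -> exists T', infinitely_often T' /\
     (forall n, T' n -> T n) /\ (forall n m, T' n -> T' m -> P k n m)) ->
  exists phi : nat -> nat, (forall i, (phi i < phi (S i))%nat) /\
    forall k i j, (k <= i)%nat -> (k <= j)%nat -> P k (phi i) (phi j).
Proof.
  intros Hrefine.
  destruct (choice (fun (kT : nat * (nat -> Prop)) T' =>
      infinitely_often (snd kT) -> infinitely_often T' /\
      (forall n, T' n -> snd kT n) /\ (forall n m, T' n -> T' m -> P (fst kT) n m)))
    as [refine Hrefine'].
  { intros [k T]. destruct (classic (infinitely_often T)) as [HT|HT].
    - destruct (Hrefine k T HT) as [T' HT']. exists T'. auto.
    - exists T. tauto. }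
  pose (Ts := fix Ts (k : nat) : nat -> Prop :=
          match k with O => refine (O, fun _ => True) | S k' => refine (S k', Ts k') end).
  assert (HTs : forall k, infinitely_often (Ts k) /\ (forall n, Ts (S k) n -> Ts k n) /\
                  (forall n m, Ts k n -> Ts k m -> P k n m)).
  { induction k as [|k [IH _]].
    - destruct (Hrefine' (O, fun _ => True)) as [A [_ C]].
      + intros N. exists N. split; [lia|exact I].
      + split; [exact A|split; [|exact C]].
        intros n. apply (Hrefine' (1%nat, Ts O)). exact A.
    - destruct (Hrefine' (S k, Ts k) IH) as [A [_ C]].
      split; [exact A|split; [|exact C]].
      intros n. apply (Hrefine' (S (S k), Ts (S k))). exact A. }
  assert (Hnested : forall k j, (k <= j)%nat -> forall n, Ts j n -> Ts k n).
  { intros k j Hkj. induction Hkj as [|j Hkj IH]; intros n Hn; [exact Hn|].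
    apply IH, (proj1 (proj2 (HTs j))), Hn. }
  destruct (choice (fun (kN : nat * nat) n => (snd kN <= n)%nat /\ Ts (fst kN) n))
    as [next Hnext].
  { intros [k N]. exact (proj1 (HTs k) N). }
  pose (phi := fix phi (i : nat) : nat :=
          match i with O => next (O, O) | S i' => next (S i', S (phi i')) end).
  assert (Hphi : forall i, Ts i (phi i)).
  { intros [|i]; [exact (proj2 (Hnext (O, O)))|exact (proj2 (Hnext (S i, S (phi i))))]. }
  exists phi. split.
  - intros i. exact (proj1 (Hnext (S i, S (phi i)))).
  - intros k i j Hi Hj.
    apply (proj2 (proj2 (HTs k))); [apply (Hnested k i)|apply (Hnested k j)]; auto.
Qed.

Section MetricSpace.
Context {X : Type} (d : X -> X -> R) (Hmet : is_metric d).

Lemma dist_refl x : d x x = 0.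
Proof. apply (proj1 Hmet). reflexivity. Qed.

Lemma dist_sym x y : d x y = d y x.
Proof. apply (proj1 (proj2 Hmet)). Qed.

Lemma dist_triangle x y z : d x z <= d x y + d y z.
Proof. apply (proj2 (proj2 Hmet)). Qed.

Lemma dist_eq0 x y : d x y = 0 -> x = y.
Proof. apply (proj1 Hmet). Qed.

Lemma dist_nonneg x y : 0 <= d x y.
Proof.
  pose proof (dist_triangle x y x). rewrite dist_refl, (dist_sym y x) in H. lra.
Qed.

Lemma compact_cluster_point (K : X -> Prop) (u : nat -> X) (S : nat -> Prop) :
  compact_set d K -> infinitely_often S -> (forall n, S n -> K (u n)) ->
  exists z, K z /\ cluster_point d u S z.
Proof.
  intros HK HS HuK. apply NNPP. intros Hno.
  assert (Havoid : forall z, K z -> exists eta N, 0 < eta /\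
            forall n, (N <= n)%nat -> S n -> eta <= d z (u n)).
  { intros z Hz. apply NNPP. intros Hn. apply Hno. exists z. split; [exact Hz|].
    intros eta Heta N. apply NNPP. intros Hn2. apply Hn. exists eta, N.
    split; [exact Heta|]. intros n HNn HSn. apply Rnot_lt_le. intros Hlt.
    apply Hn2. eauto. }
  destruct (HK (X * nat)%type (fun i w => exists eta, 0 < eta /\
      (forall n, (snd i <= n)%nat -> S n -> eta <= d (fst i) (u n)) /\ d (fst i) w < eta))
    as [l Hl].
  - intros [z N] w [eta [Heta [Hfar Hw]]]. exists (eta - d z w). split; [simpl in Hw; lra|].
    intros w' Hw'. exists eta. split; [exact Heta|split; [exact Hfar|]].
    pose proof (dist_triangle z w w'). simpl in *. lra.
  - intros z Hz. destruct (Havoid z Hz) as [eta [N [Heta Hfar]]].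
    exists (z, N), eta. simpl. rewrite dist_refl. auto.
  - destruct (In_upper_bound snd l) as [N0 HN0].
    destruct (HS N0) as [n [Hn HSn]].
    destruct (Hl (u n) (HuK n HSn)) as [[z N] [Hin [eta [_ [Hfar Hw]]]]].
    specialize (HN0 _ Hin). simpl in *.
    pose proof (Hfar n ltac:(lia) HSn). lra.
Qed.

Lemma compact_close_subsequence (K : X -> Prop) (u : nat -> X) (S : nat -> Prop) eta :
  compact_set d K -> infinitely_often S -> (forall n, S n -> K (u n)) -> 0 < eta ->
  exists S', infinitely_often S' /\ (forall n, S' n -> S n) /\
    (forall n m, S' n -> S' m -> d (u n) (u m) < eta).
Proof.
  intros HK HS HuK Heta.
  destruct (compact_cluster_point K u S HK HS HuK) as [z [_ Hz]].
  exists (fun n => S n /\ d z (u n) < eta / 2). split; [|split].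
  - intros N. destruct (Hz (eta / 2) ltac:(lra) N) as [n Hn]. exists n. exact Hn.
  - intros n [Hn _]. exact Hn.
  - intros n m [_ Hn] [_ Hm]. pose proof (dist_triangle (u n) z (u m)).
    rewrite (dist_sym (u n) z) in *. lra.
Qed.

End MetricSpace.

Lemma cluster_point_limit {X Y : Type} (d : X -> X -> R) (D : Y -> Y -> R)
    (iota : X -> Y) (xs : nat -> X) (S : nat -> Prop) (x : Y) (z : X) :
  is_metric D -> (forall a b, D (iota a) (iota b) <= d a b) ->
  (forall eta, 0 < eta -> exists N, forall n, (N <= n)%nat -> D (iota (xs n)) x < eta) ->
  cluster_point d xs S z -> iota z = x.
Proof.
  intros HD Hlip Hconv Hz. apply (dist_eq0 D HD).
  destruct (Rle_lt_or_eq_dec _ _ (dist_nonneg D HD (iota z) x)) as [Hpos|Heq]; [|auto].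
  destruct (Hconv (D (iota z) x / 2) ltac:(lra)) as [N HN].
  destruct (Hz (D (iota z) x / 2) ltac:(lra) N) as [n [Hn [_ Hzn]]].
  pose proof (dist_triangle D HD (iota z) (iota (xs n)) x).
  pose proof (Hlip z (xs n)). specialize (HN n Hn). lra.
Qed.

Lemma boundary_sequence_escapes {X Y : Type} (d : X -> X -> R) (D : Y -> Y -> R)
    (iota : X -> Y) (xs : nat -> X) (x : Y) (p : X) :
  is_metric d -> proper_space d -> is_metric D ->
  (forall a b, D (iota a) (iota b) <= d a b) -> (forall z, iota z <> x) ->
  (forall eta, 0 < eta -> exists N, forall n, (N <= n)%nat -> D (iota (xs n)) x < eta) ->
  forall K, exists N, forall n, (N <= n)%nat -> K < d p (xs n).
Proof.
  intros Hmet Hprop HD Hlip Hx Hconv K. apply NNPP. intros Hn.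
  assert (HS : infinitely_often (fun n => d p (xs n) <= K)).
  { intros N. apply NNPP. intros HN. apply Hn. exists N. intros n Hn'.
    apply Rnot_le_lt. intros Hle. apply HN. eauto. }
  destruct (compact_cluster_point d Hmet _ xs _ (Hprop p K) HS (fun n h => h)) as [z [_ Hz]].
  exact (Hx z (cluster_point_limit d D iota xs _ x z HD Hlip Hconv Hz)).
Qed.

Lemma part_le a b l : part a b l -> a <= b.
Proof.
  revert a. induction l as [|t l IH]; simpl; intros a H; [subst; lra|].
  destruct H as [Hat Hl]. specialize (IH _ Hl). lra.
Qed.

Lemma glb_exists (F : R -> Prop) (m0 : R) :
  (exists y, F y) -> (forall y, F y -> m0 <= y) -> exists m, is_glb F m.
Proof.
  intros [y0 Hy0] Hlow.
  destruct (completeness (fun y => F (- y))) as [M [HM1 HM2]].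
  - exists (- m0). intros y Hy. specialize (Hlow _ Hy). lra.
  - exists (- y0). rewrite Ropp_involutive. exact Hy0.
  - exists (- M). split.
    + intros y Hy. assert (- y <= M) by (apply HM1; rewrite Ropp_involutive; exact Hy). lra.
    + intros b Hb. assert (M <= - b) by (apply HM2; intros y Hy; specialize (Hb _ Hy); lra).
      lra.
Qed.

Section GeodesicSegment.
Context {X : Type} (d : X -> X -> R) (g : R -> X) (L : R).
Hypothesis Hg : forall s t, 0 <= s <= L -> 0 <= t <= L -> d (g s) (g t) = Rabs (s - t).

Lemma poly_len_geodesic l s t : 0 <= s -> t <= L -> part s t l -> poly_len d g s l = t - s.
Proof.
  revert s. induction l as [|a l IH]; simpl; intros s Hs Ht Hl; [subst; lra|].
  destruct Hl as [Hsa Hl]. pose proof (part_le _ _ _ Hl).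
  rewrite (IH a ltac:(lra) Ht Hl), Hg, Rabs_left; lra.
Qed.

Lemma curve_length_geodesic s t : 0 <= s <= t -> t <= L -> curve_length d g s t (t - s).
Proof.
  intros Hst Ht. split.
  - intros v [l [Hl ->]]. rewrite (poly_len_geodesic l s t); [lra|lra|lra|exact Hl].
  - intros b Hb. destruct (Rle_lt_or_eq_dec _ _ (proj2 Hst)) as [Hlt|<-].
    + apply Hb. exists (t :: nil). simpl. split; [lra|]. rewrite Hg, Rabs_left; lra.
    + apply Hb. exists nil. simpl. split; [reflexivity|lra].
Qed.

Variable f : X -> R.
Hypothesis Hf0 : forall z, 0 <= f z.
Hypothesis Hf1 : forall z, f z <= 1.

Lemma lower_sum_geodesic_le l s v :
  0 <= s -> part s L l -> lower_sum_rel d f g s l v -> v <= L - s.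
Proof.
  revert s v. induction l as [|a l IH]; simpl; intros s v Hs Hl Hv; [subst; lra|].
  destruct Hl as [Hsa Hl]. destruct Hv as [m [Lc [v' [Hglb [Hlen [Hv' ->]]]]]].
  pose proof (part_le _ _ _ Hl).
  replace Lc with (a - s)
    by exact (is_lub_u _ _ _ (curve_length_geodesic s a ltac:(lra) ltac:(lra)) Hlen).
  assert (Hm1 : m <= 1).
  { apply Rle_trans with (f (g s)); [apply (proj1 Hglb); exists s; split; [lra|auto]|apply Hf1]. }
  specialize (IH a v' ltac:(lra) Hl Hv'). nra.
Qed.

Lemma line_integral_geodesic_le : 0 <= L -> exists I, line_integral d f g 0 L I /\ I <= L.
Proof.
  intros HL.
  set (E := fun v => exists l, part 0 L l /\ lower_sum_rel d f g 0 l v).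
  assert (HEbound : forall v, E v -> v <= L).
  { intros v [l [Hl Hv]]. pose proof (lower_sum_geodesic_le l 0 v ltac:(lra) Hl Hv). lra. }
  assert (HEne : exists v, E v).
  { destruct (Rle_lt_or_eq_dec _ _ HL) as [Hpos|<-].
    - destruct (glb_exists (fun y => exists t, 0 <= t <= L /\ y = f (g t)) 0) as [m Hm].
      + exists (f (g 0)), 0. split; [lra|reflexivity].
      + intros y [t [_ ->]]. apply Hf0.
      + exists (m * (L - 0) + 0), (L :: nil). split; [simpl; split; [lra|reflexivity]|].
        exists m, (L - 0), 0. split; [exact Hm|split; [|split; reflexivity]].
        apply curve_length_geodesic; lra.
    - exists 0, nil. split; reflexivity. }
  destruct (completeness E (ex_intro _ L HEbound) HEne) as [I HI].
  exists I. split; [exact HI|]. apply (proj2 HI). exact HEbound.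
Qed.

End GeodesicSegment.

Lemma uniformized_dist_le_dist {X : Type} (d : X -> X -> R) (p : X) (eps : R) (a b : X) v :
  is_metric d -> geodesic_space d -> 0 <= eps -> uniformized_dist d p eps a b v -> v <= d a b.
Proof.
  intros Hmet Hgeo Heps [Hv _].
  destruct (Hgeo a b) as [g [Hga [Hgb Hg]]].
  pose proof (dist_nonneg d Hmet a b) as HL.
  set (f := fun z => exp (- eps * d p z)).
  assert (Hf1 : forall z, f z <= 1).
  { intros z. unfold f. rewrite <- exp_0.
    pose proof (dist_nonneg d Hmet p z).
    destruct (Rle_lt_or_eq_dec (- eps * d p z) 0 ltac:(nra)) as [Hlt|Heq];
      [left; apply exp_increasing, Hlt|right; rewrite Heq; reflexivity]. }
  destruct (line_integral_geodesic_le d g (d a b) Hg f (fun z => Rlt_le _ _ (exp_pos _)) Hf1 HL)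
    as [I [HI HIL]].
  apply Rle_trans with I; [|exact HIL].
  apply Hv. exists g, 0, (d a b). split; [|auto].
  split; [exact HL|split].
  - intros t Ht eta Heta. exists eta. split; [exact Heta|].
    intros s Hs Hst. rewrite Hg by lra. exact Hst.
  - exists (d a b - 0). apply (curve_length_geodesic d g (d a b) Hg); lra.
Qed.

Lemma geodesic_point {X : Type} (d : X -> X -> R) (a b : X) (t : R) :
  geodesic_space d -> 0 <= t <= d a b -> exists u, d a u = t /\ d u b = d a b - t.
Proof.
  intros Hgeo Ht. destruct (Hgeo a b) as [g [Hga [Hgb Hg]]].
  exists (g t). split.
  - rewrite <- Hga at 1. rewrite Hg, Rminus_0_l, Rabs_Ropp, Rabs_pos_eq; lra.
  - rewrite <- Hgb at 1. rewrite Hg, Rabs_left1; lra.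
Qed.

Lemma gromov_prod_geodesic_point {X : Type} (d : X -> X -> R) (p u b : X) (K : R) :
  d p u = K -> d u b = d p b - K -> gromov_prod d p u b = K.
Proof. intros Hu Hb. unfold gromov_prod. rewrite Hu, Hb. field. Qed.

Section Hyperbolic.
Context {X : Type} (d : X -> X -> R) (delta : R) (Hmet : is_metric d).
Hypothesis Hfour : forall x y z p : X,
  gromov_prod d p x z >= Rmin (gromov_prod d p x y) (gromov_prod d p y z) - delta.

Lemma four_point_delta_nonneg (p : X) : 0 <= delta.
Proof.
  pose proof (Hfour p p p p) as H. revert H.
  unfold gromov_prod, Rmin. rewrite (dist_refl d Hmet). destruct Rle_dec; lra.
Qed.

Lemma gromov_prod_sym p a b : gromov_prod d p a b = gromov_prod d p b a.
Proof. unfold gromov_prod. rewrite (dist_sym d Hmet a b). field. Qed.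

Lemma gromov_prod_chain p a u v b :
  gromov_prod d p a b >=
    Rmin (gromov_prod d p a u) (Rmin (gromov_prod d p u v) (gromov_prod d p v b)) - 2 * delta.
Proof.
  pose proof (four_point_delta_nonneg p). pose proof (Hfour a u b p). pose proof (Hfour u v b p).
  revert H0 H1. unfold Rmin. repeat destruct Rle_dec; lra.
Qed.

Lemma escaping_sequence_refine (p : X) (xs : nat -> X) :
  proper_space d -> geodesic_space d ->
  (forall K, exists N, forall n, (N <= n)%nat -> K < d p (xs n)) ->
  forall K T, infinitely_often T -> exists T', infinitely_often T' /\
    (forall n, T' n -> T n) /\ (forall n m, T' n -> T' m -> gromov_prod d p (xs n) (xs m) > K).
Proof.
  intros Hprop Hgeo Hesc K T HT.
  pose proof (four_point_delta_nonneg p).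
  (* chosen so that L - 1/2 - 2 delta > K *)
  set (L := Rabs K + 2 * delta + 1).
  assert (HL : 0 <= L) by (pose proof (Rabs_pos K); unfold L; lra).
  destruct (Hesc L) as [N HN].
  destruct (choice (fun n u => L <= d p (xs n) -> d p u = L /\ d u (xs n) = d p (xs n) - L))
    as [u Hu].
  { intros n. destruct (classic (L <= d p (xs n))) as [Hn|Hn].
    - destruct (geodesic_point d p (xs n) L Hgeo (conj HL Hn)) as [w Hw]. exists w. auto.
    - exists p. tauto. }
  set (T1 := fun n => T n /\ (N <= n)%nat).
  assert (HT1 : infinitely_often T1).
  { intros N'. destruct (HT (Nat.max N N')) as [n [Hn HTn]]. exists n. unfold T1.
    split; [lia|split; [exact HTn|lia]]. }
  assert (Hu1 : forall n, T1 n -> d p (u n) = L /\ d (u n) (xs n) = d p (xs n) - L).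
  { intros n [_ Hn]. apply Hu. left. apply HN, Hn. }
  destruct (compact_close_subsequence d Hmet (fun y => d p y <= L) u T1 1 (Hprop p L) HT1
              (fun n Hn => Req_le _ _ (proj1 (Hu1 n Hn))) Rlt_0_1) as [T' [HT' [Hsub Hclose]]].
  exists T'. split; [exact HT'|split; [intros n Hn; apply Hsub, Hn|]].
  intros n m Hn Hm.
  destruct (Hu1 n (Hsub n Hn)) as [Dn En]. destruct (Hu1 m (Hsub m Hm)) as [Dm Em].
  pose proof (gromov_prod_chain p (xs n) (u n) (u m) (xs m)) as Hchain.
  rewrite (gromov_prod_sym p (xs n) (u n)),
    (gromov_prod_geodesic_point d p (u n) (xs n) L Dn En),
    (gromov_prod_geodesic_point d p (u m) (xs m) L Dm Em) in Hchain.
  assert (Huv : gromov_prod d p (u n) (u m) > L - 1 / 2).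
  { unfold gromov_prod. rewrite Dn, Dm. specialize (Hclose n m Hn Hm). lra. }
  pose proof (Rle_abs K). revert Hchain. unfold Rmin, L in *. repeat destruct Rle_dec; lra.
Qed.

End Hyperbolic.

Theorem lemma3p4 (X : Type) (d : X -> X -> R) (delta : R) (p : X) (eps : R)
  (de : X -> X -> R) (Y : Type) (D : Y -> Y -> R) (iota : X -> Y) (x : Y) :
  gromov_hyperbolic d delta ->
  0 < eps ->
  (forall y z : X, uniformized_dist d p eps y z (de y z)) ->
  is_completion de D iota ->
  (* x lies in the boundary: in the closure of X^eps inside the completion, but not in X^eps *)
  (forall eta, 0 < eta -> exists z : X, D x (iota z) < eta) ->
  (forall z : X, iota z <> x) ->
  forall xs : nat -> X,
    (forall eta, 0 < eta -> exists N, forall n, (N <= n)%nat -> D (iota (xs n)) x < eta) ->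
    exists phi : nat -> nat,
      (forall k, (phi k < phi (S k))%nat) /\
      gromov_sequence d p (fun k => xs (phi k)).
Proof.
  (* the closure hypothesis on x already follows from the convergence of xs *)
  intros [Hmet [_ [Hprop [Hgeo Hfour]]]] Heps Hde [HD [_ [Hiso _]]] _ Hx xs Hconv.
  assert (Hlip : forall a b, D (iota a) (iota b) <= d a b).
  { intros a b. rewrite Hiso. apply (uniformized_dist_le_dist d p eps); auto; lra. }
  pose proof (boundary_sequence_escapes d D iota xs x p Hmet Hprop HD Hlip Hx Hconv) as Hesc.
  destruct (diagonal_subsequence (fun k n m => gromov_prod d p (xs n) (xs m) > INR k))
    as [phi [Hinc Hphi]].
  { intros k. exact (escaping_sequence_refine d delta Hmet Hfour p xs Hprop Hgeo Hesc (INR k)). }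
  exists phi. split; [exact Hinc|].
  intros M. destruct (INR_archimed 1 M Rlt_0_1) as [k Hk].
  exists k. intros i j Hi Hj. pose proof (Hphi k i j Hi Hj). lra.
Qed.
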